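(* Let $w_0$ and $w_1$ be words of length $N$. If $w_0\to w_1$ is a star anagram with star path $p$, then $w_1\to w_0$ is a star anagram with star path the reversed path $\bar p$.
   Context: A path of length $N$ is a vector $p=(p_0,\dots,p_{N-1})$ whose entries are the integers $0,\dots,N-1$ in some order; indices are cyclic, $p_N=p_0$. If $w_0=a_0a_1\cdots a_{N-1}$, then $p$ is a path for the anagram $w_0\to w_1$ if $w_1=a_{p_0}a_{p_1}\cdots a_{p_{N-1}}$. Positions $i,j$ are cyclically adjacent if $(i-j)\bmod N\in\{1,N-1\}$, where $x\bmod N$ is the remainder in $\{0,\dots,N-1\}$. A path $p$ is a star path if for every $n\in\{0,\dots,N-1\}$ the positions $p_n$ and $p_{n+1}$ are not cyclically adjacent (no letter in the new word is adjacent, counting first and last as adjacent, to one of its original neighbors). The anagram $w_0\to w_1$ is a star anagram with star path $p$ if $p$ is a path for it that is a star path. The reversed path $\bar p=(\bar p_0,\dots,\bar p_{N-1})$ of $p$ is the inverse permutation, i.e. $\bar p_{p_n}=n$ and $p_{\bar p_n}=n$ for all $n$; it is a path for $w_1\to w_0$. *)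

From mathcomp Require Import all_boot all_order all_fingroup.
Set Implicit Arguments. Unset Strict Implicit. Unset Printing Implicit Defensive.

(* A path of length N is a permutation p of 'I_N (entries p_0..p_{N-1} are
   0..N-1 in some order); p n is p_n.  Cyclic index n+1 is [ordS n]. *)

Definition cyc_adj (N : nat) (i j : 'I_N) : bool :=
  let d := (i + N - j) %% N in (d == 1) || (d == N.-1).

Definition is_path_for (T : Type) (N : nat) (p : {perm 'I_N})
  (w0 w1 : N.-tuple T) : Prop :=
  forall n : 'I_N, tnth w1 n = tnth w0 (p n).

Definition star_path (N : nat) (p : {perm 'I_N}) : Prop :=
  forall n : 'I_N, ~~ cyc_adj (p n) (p (ordS n)).

Definition star_anagram_with (T : Type) (N : nat) (w0 w1 : N.-tuple T)
  (p : {perm 'I_N}) : Prop :=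
  is_path_for p w0 w1 /\ star_path p.

Definition reversed_path (N : nat) (p : {perm 'I_N}) : {perm 'I_N} := p^-1%g.

From mathcomp Require Import all_boot all_order all_fingroup.
From mathcomp Require Import zify.

Set Implicit Arguments.
Unset Strict Implicit.
Unset Printing Implicit Defensive.

(* Cyclic adjacency is the symmetric closure of the successor relation
   [ordS], so a star path forbids adjacency between the images of any two
   adjacent positions, not only of [n] and [ordS n].  Applied to the
   positions [p^-1 n] and [p^-1 (ordS n)], whose images [n] and [ordS n] are
   adjacent, this shows that [p^-1] is again a star path. *)

Lemma modn_lt_double (x N : nat) :
  x < N.*2 -> x %% N = (if x < N then x else x - N).
Proof.
case: ifP => [ltxN _|geNx ltx2N]; first by rewrite modn_small.
have -> : x = (x - N) + N by rewrite subnK // leqNgt geNx.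
rewrite modnDr modn_small ?addnK //; lia.
Qed.

Lemma cyc_adjE (N : nat) (i j : 'I_N) :
  cyc_adj i j = (j == ordS i) || (i == ordS j).
Proof.
rewrite /cyc_adj -!val_eqE /=.
have ltiN := ltn_ord i; have ltjN := ltn_ord j.
rewrite (@modn_lt_double (i + N - j)); last by lia.
rewrite (@modn_lt_double i.+1); last by lia.
rewrite (@modn_lt_double j.+1); last by lia.
by repeat case: ifP; move=> *; apply/idP/idP => /orP[/eqP e|/eqP e]; apply/orP; lia.
Qed.

Lemma cyc_adj_ordS (N : nat) (n : 'I_N) : cyc_adj n (ordS n).
Proof. by rewrite cyc_adjE eqxx. Qed.

Lemma star_path_cyc_adj (N : nat) (p : {perm 'I_N}) (i j : 'I_N) :
  star_path p -> cyc_adj i j -> ~~ cyc_adj (p i) (p j).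
Proof.
move=> star; rewrite cyc_adjE => /orP[/eqP->|/eqP->]; first exact: star.
by rewrite cyc_adjE orbC -cyc_adjE; apply: star.
Qed.

Lemma star_path_inv (N : nat) (p : {perm 'I_N}) :
  star_path p -> star_path p^-1%g.
Proof.
move=> star n; apply/negP => adj.
by move: (star_path_cyc_adj star adj); rewrite !permKV cyc_adj_ordS.
Qed.

Lemma is_path_for_inv (T : Type) (N : nat) (p : {perm 'I_N})
    (w0 w1 : N.-tuple T) :
  is_path_for p w0 w1 -> is_path_for p^-1%g w1 w0.
Proof. by move=> path n; rewrite path permKV. Qed.

Theorem mainTheorem9 (T : Type) (N : nat) (w0 w1 : N.-tuple T)
  (p : {perm 'I_N}) :
  star_anagram_with w0 w1 p -> star_anagram_with w1 w0 (reversed_path p).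
Proof.
move=> [path star]; split; first exact: is_path_for_inv.
exact: star_path_inv.
Qed.
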